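(* Let $f$ be any WTP function, $\tilde f$ its concave relaxation, and $\widetilde F(\tilde x)=\max_{\tilde y\in\widetilde{\mathcal{Y}}_{\mathcal{M}}(\tilde x)}\tilde f(\tilde y)$. Then $\widetilde F$ is concave on $\widetilde{\mathcal{X}}_\ell$.
   Context: $\mathcal{M}$ is a matroid on $[n]$ with matroid polytope $\mathcal{P}(\mathcal{M})$ (convex hull of characteristic vectors of independent sets). $\widetilde{\mathcal{X}}_\ell=\{\tilde x\in[0,1]^n:\sum_i\tilde x_i\le\ell\}$ and $\widetilde{\mathcal{Y}}_{\mathcal{M}}(\tilde x)=\{\tilde y\in[0,1]^n:\tilde y\in\mathcal{P}(\mathcal{M}),\tilde y\le\tilde x\}$. A WTP function is $f(y)=\sum_{j\in\mathcal{C}}c_j\min\{b_j,y\cdot w_j\}$ for $y\in\{0,1\}^n$, with finite $\mathcal{C}$, $c_j>0$, $b_j\in\mathbb{R}_{\ge0}\cup\{\infty\}$, $w_j\in\mathbb{R}^n_{\ge0}$; its concave relaxation $\tilde f$ is the same formula for $y\in[0,1]^n$. *)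

From HB Require Import structures.
From mathcomp Require Import classical_sets reals.
From mathcomp Require Import all_boot all_order all_algebra.
Set Implicit Arguments. Unset Strict Implicit. Unset Printing Implicit Defensive.
Import Order.TTheory GRing.Theory Num.Theory.
Local Open Scope ring_scope.


Definition is_matroid (n : nat) (ind : pred {set 'I_n}) : Prop :=
  [/\ ind set0,
      (forall A B : {set 'I_n}, A \subset B -> ind B -> ind A) &
      (forall A B : {set 'I_n}, ind A -> ind B -> (#|A| < #|B|)%N ->
         exists2 e, e \in B :\: A & ind (e |: A))].

Definition chi (R : pzRingType) (n : nat) (S : {set 'I_n}) : 'I_n -> R :=
  fun i => (i \in S)%:R.

Definition in_matroid_polytope (R : realType) (n : nat) (ind : pred {set 'I_n})
    (y : 'I_n -> R) : Prop :=
  exists lam : {set 'I_n} -> R,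
    [/\ (forall S, 0 <= lam S),
        (forall S, ~~ ind S -> lam S = 0),
        \sum_(S : {set 'I_n}) lam S = 1 &
        (forall i, y i = \sum_(S : {set 'I_n}) lam S * chi R S i)].

Definition Xtilde (R : realType) (n ell : nat) : set ('I_n -> R) :=
  [set x | (forall i, 0 <= x i <= 1) /\ \sum_i x i <= ell%:R]%classic.

Definition Ytilde (R : realType) (n : nat) (ind : pred {set 'I_n})
    (x : 'I_n -> R) : set ('I_n -> R) :=
  [set y | (forall i, 0 <= y i <= 1) /\ in_matroid_polytope ind y
           /\ (forall i, y i <= x i)]%classic.

Definition dotv (R : pzRingType) (n : nat) (y w : 'I_n -> R) : R :=
  \sum_i y i * w i.

(* Concave relaxation of the WTP function with m clauses indexed by 'I_m:
   f(y) = sum_j c_j min{b_j, y.w_j};  b j = None encodes b_j = +infinity. *)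
Definition wtp (R : realType) (n m : nat) (c : 'I_m -> R) (b : 'I_m -> option R)
    (w : 'I_m -> 'I_n -> R) (y : 'I_n -> R) : R :=
  \sum_j c j * (match b j with
                | Some bj => Num.min bj (dotv y (w j))
                | None => dotv y (w j)
                end).

Definition wtp_params (R : realType) (n m : nat) (c : 'I_m -> R)
    (b : 'I_m -> option R) (w : 'I_m -> 'I_n -> R) : Prop :=
  [/\ (forall j, 0 < c j),
      (forall j bj, b j = Some bj -> 0 <= bj) &
      (forall j i, 0 <= w j i)].

(* F~(x) = max_{y in Y_M(x)} f~(y) (the max is attained, so it equals the sup). *)
Definition Ftilde (R : realType) (n m : nat) (ind : pred {set 'I_n})
    (c : 'I_m -> R) (b : 'I_m -> option R) (w : 'I_m -> 'I_n -> R)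
    (x : 'I_n -> R) : R :=
  sup [set wtp c b w y | y in Ytilde ind x]%classic.

From HB Require Import structures.
From mathcomp Require Import classical_sets reals.
From mathcomp Require Import all_boot all_order all_algebra.
From mathcomp Require Import ring lra.
Set Implicit Arguments. Unset Strict Implicit. Unset Printing Implicit Defensive.
Import Order.TTheory GRing.Theory Num.Theory.
Local Open Scope ring_scope.

(* The map x |-> Y_M(x) is jointly convex: a convex combination of feasible
   points y1 in Y_M(x1), y2 in Y_M(x2) is feasible for the same combination of
   x1 and x2, because the matroid polytope, the box and the constraint y <= x
   are all convex.  Since the relaxation f~ is concave (a positive sum of
   minima of affine functions), t f~(y1) + (1-t) f~(y2) is at most the value
   of some feasible point of Y_M(t x1 + (1-t) x2), and taking suprema over y1
   and y2 gives concavity of F~. *)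

Section ConvexCombinationOfSuprema.
Variable R : realType.

Lemma ge_mul_sup (A : set R) (s K : R) :
  (A !=set0)%classic -> 0 <= s -> (forall a, A a -> s * a <= K) ->
  s * sup A <= K.
Proof.
move=> [a0 Aa0] s_ge0 sA_le.
have [s0|s_neq0] := eqVneq s 0; first by have := sA_le _ Aa0; rewrite s0 !mul0r.
have s_gt0 : 0 < s by rewrite lt_def s_neq0 s_ge0.
rewrite mulrC -ler_pdivlMr //; apply: ge_sup; first by exists a0.
by move=> a Aa; rewrite ler_pdivlMr // mulrC; exact: sA_le.
Qed.

Lemma ge_convex_comb_sup (A B : set R) (t K : R) :
  (A !=set0)%classic -> (B !=set0)%classic -> 0 <= t <= 1 ->
  (forall a b, A a -> B b -> t * a + (1 - t) * b <= K) ->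
  t * sup A + (1 - t) * sup B <= K.
Proof.
move=> A0 B0 /andP[t_ge0 t_le1] comb_le.
suff : t * sup A <= K - (1 - t) * sup B by lra.
apply: ge_mul_sup => // a Aa.
suff : (1 - t) * sup B <= K - t * a by lra.
apply: ge_mul_sup; [exact: B0 | lra |].
by move=> b Bb; have := comb_le _ _ Aa Bb; lra.
Qed.

End ConvexCombinationOfSuprema.

Section ConcaveRelaxation.
Variables (R : realType) (n m : nat).
Implicit Types (t : R) (y : 'I_n -> R).

Lemma dotv_convex_comb t y1 y2 (v : 'I_n -> R) :
  dotv (fun i => t * y1 i + (1 - t) * y2 i) v = t * dotv y1 v + (1 - t) * dotv y2 v.
Proof. by rewrite /dotv !mulr_sumr -big_split; apply: eq_bigr => i _ /=; ring. Qed.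

Lemma min_concave t (a1 a2 b1 b2 : R) : 0 <= t <= 1 ->
  t * Num.min a1 b1 + (1 - t) * Num.min a2 b2
    <= Num.min (t * a1 + (1 - t) * a2) (t * b1 + (1 - t) * b2).
Proof.
move=> /andP[t_ge0 t_le1].
have mina1 : Num.min a1 b1 <= a1 by rewrite ge_min lexx.
have minb1 : Num.min a1 b1 <= b1 by rewrite ge_min lexx orbT.
have mina2 : Num.min a2 b2 <= a2 by rewrite ge_min lexx.
have minb2 : Num.min a2 b2 <= b2 by rewrite ge_min lexx orbT.
by rewrite le_min; apply/andP; split; nra.
Qed.

Lemma wtp_concave (c : 'I_m -> R) b w t y1 y2 :
  (forall j, 0 < c j) -> 0 <= t <= 1 ->
  t * wtp c b w y1 + (1 - t) * wtp c b w y2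
    <= wtp c b w (fun i => t * y1 i + (1 - t) * y2 i).
Proof.
move=> c_gt0 t01; rewrite /wtp !mulr_sumr -big_split; apply: ler_sum => j _ /=.
rewrite dotv_convex_comb mulrCA [(1 - t) * _]mulrCA -mulrDr.
apply: ler_wpM2l; first exact: ltW.
case: (b j) => [bj|//].
have bj_comb : t * bj + (1 - t) * bj = bj by ring.
by rewrite -[in leRHS]bj_comb; exact: min_concave.
Qed.

Lemma wtp_le_sum_weights (c : 'I_m -> R) b w y :
  wtp_params c b w -> (forall i, 0 <= y i <= 1) ->
  wtp c b w y <= \sum_j c j * \sum_i w j i.
Proof.
move=> [c_gt0 _ w_ge0] y01; apply: ler_sum => j _.
apply: ler_wpM2l; first exact: ltW.
have dot_le : dotv y (w j) <= \sum_i w j i.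
  apply: ler_sum => i _; have /andP[y_ge0 y_le1] := y01 i; have := w_ge0 j i; nra.
by case: (b j) => [bj|//]; apply: le_trans dot_le; rewrite ge_min lexx orbT.
Qed.

End ConcaveRelaxation.

Section FeasibleSet.
Variables (R : realType) (n : nat) (ind : pred {set 'I_n}).
Implicit Types (t : R) (x y : 'I_n -> R).

Lemma matroid_polytope_convex t y1 y2 : 0 <= t <= 1 ->
  in_matroid_polytope ind y1 -> in_matroid_polytope ind y2 ->
  in_matroid_polytope ind (fun i => t * y1 i + (1 - t) * y2 i).
Proof.
move=> /andP[t_ge0 t_le1] [l1 [l1_ge0 l1_ind l1_sum l1_y]] [l2 [l2_ge0 l2_ind l2_sum l2_y]].
exists (fun S => t * l1 S + (1 - t) * l2 S); split.
- by move=> S; have := l1_ge0 S; have := l2_ge0 S; nra.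
- by move=> S S_dep; rewrite l1_ind // l2_ind // !mulr0 addr0.
- by rewrite big_split /= -!mulr_sumr l1_sum l2_sum; ring.
- by move=> i; rewrite l1_y l2_y !mulr_sumr -big_split; apply: eq_bigr => S _ /=; ring.
Qed.

Lemma Ytilde_convex_comb t x1 x2 y1 y2 : 0 <= t <= 1 ->
  Ytilde ind x1 y1 -> Ytilde ind x2 y2 ->
  Ytilde ind (fun i => t * x1 i + (1 - t) * x2 i)
             (fun i => t * y1 i + (1 - t) * y2 i).
Proof.
move=> t01 [y1_01 [P_y1 y1_le]] [y2_01 [P_y2 y2_le]].
have /andP[t_ge0 t_le1] := t01.
split; [|split]; last by move=> i; have := y1_le i; have := y2_le i; nra.
- move=> i; have /andP[? ?] := y1_01 i; have /andP[? ?] := y2_01 i.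
  by apply/andP; split; nra.
- exact: matroid_polytope_convex.
Qed.

Lemma Ytilde0 x : ind set0 -> (forall i, 0 <= x i) -> Ytilde ind x (fun=> 0).
Proof.
move=> ind0 x_ge0; split; [by move=> i; rewrite lexx ler01 | split => //].
exists (fun S => (S == set0)%:R); split.
- by move=> S; rewrite ler0n.
- by move=> S; case: eqP => [->|//]; rewrite ind0.
- by rewrite (bigD1 set0) //= eqxx big1 ?addr0 // => S /negbTE ->.
- move=> i; rewrite (bigD1 set0) //= big1 ?addr0; first by rewrite /chi in_set0 mulr0.
  by move=> S /negbTE ->; rewrite mul0r.
Qed.

Lemma has_sup_wtp_Ytilde m (c : 'I_m -> R) b w x :
  ind set0 -> wtp_params c b w -> (forall i, 0 <= x i) ->
  has_sup [set wtp c b w y | y in Ytilde ind x]%classic.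
Proof.
move=> ind0 hf x_ge0; split; first by exists (wtp c b w (fun=> 0)), (fun=> 0) => //; exact: Ytilde0.
exists (\sum_j c j * \sum_i w j i) => _ [y [y01 _] <-].
exact: wtp_le_sum_weights.
Qed.

End FeasibleSet.

Theorem lemma16 (R : realType) (n : nat) (ind : pred {set 'I_n})
    (hM : is_matroid ind) (ell m : nat) (c : 'I_m -> R)
    (b : 'I_m -> option R) (w : 'I_m -> 'I_n -> R)
    (hf : wtp_params c b w) :
  forall (x1 x2 : 'I_n -> R) (t : R),
    Xtilde (R:=R) ell x1 -> Xtilde (R:=R) ell x2 -> 0 <= t <= 1 ->
    t * Ftilde ind c b w x1 + (1 - t) * Ftilde ind c b w x2
      <= Ftilde ind c b w (fun i => t * x1 i + (1 - t) * x2 i).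
Proof.
move=> x1 x2 t [x1_01 _] [x2_01 _] t01.
have [ind0 _ _] := hM.
have [c_gt0 _ _] := hf.
have x1_ge0 i : 0 <= x1 i by have /andP[] := x1_01 i.
have x2_ge0 i : 0 <= x2 i by have /andP[] := x2_01 i.
have x_ge0 i : 0 <= t * x1 i + (1 - t) * x2 i.
  by have /andP[? ?] := t01; have := x1_ge0 i; have := x2_ge0 i; nra.
have [Y1_ne0 _] := has_sup_wtp_Ytilde ind0 hf x1_ge0.
have [Y2_ne0 _] := has_sup_wtp_Ytilde ind0 hf x2_ge0.
apply: ge_convex_comb_sup => // _ _ [y1 Yy1 <-] [y2 Yy2 <-].
apply: le_trans (wtp_concave b w y1 y2 c_gt0 t01) _.
apply: sup_upper_bound; first exact: has_sup_wtp_Ytilde.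
by exists (fun i => t * y1 i + (1 - t) * y2 i) => //; exact: Ytilde_convex_comb.
Qed.
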